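(* Let $A$ be the filtered boundary matrix of a Morse decomposition $\{M_p\mid p\in P\}$ with respect to an admissible enumeration $\sigma_1,\dots,\sigma_n$. At every stage of the execution of ConMat on $A$, if the current matrix $B$ has $B[l,j]\neq0$ then $[\sigma_l]_P\le_P[\sigma_j]_P$. Moreover, if ConMat adds column $k$ to column $j$ during its execution, then $[\sigma_k]_P\le_P[\sigma_j]_P$.
   Context: $K$ is a finite simplicial complex ($\tau\le\sigma$: $\tau$ is a face of $\sigma$; $\mathrm{cl}(\sigma)=\{\tau:\tau\le\sigma\}$). A multivector field $\mathcal V$ on $K$ is a partition of $K$ into convex sets $V$ (if $\sigma,\tau\in V$ and $\sigma\le\mu\le\tau$ then $\mu\in V$); $[\sigma]_{\mathcal V}$ is the part containing $\sigma$, $F_{\mathcal V}(\sigma)=[\sigma]_{\mathcal V}\cup\mathrm{cl}(\sigma)$, and a path is a sequence $\sigma_1,\dots,\sigma_r$ with $\sigma_k\in F_{\mathcal V}(\sigma_{k-1})$. A Morse decomposition indexed by a finite poset $(P,\le_P)$ is a partition $K=\bigsqcup_{p\in P}M_p$ such that every path from $M_p$ to $M_q$ has $q\le_P p$; $[\sigma]_P$ is the $p$ with $\sigma\in M_p$. An admissible enumeration is $\sigma_1,\dots,\sigma_n$ of all simplices of $K$ such that (a) for some linear extension $\le_{lin}$ of $\le_P$, $i\le j\Rightarrow[\sigma_i]_P\le_{lin}[\sigma_j]_P$; (b) if $\sigma_i$ is a proper face of $\sigma_j$ then $i<j$. The filtered boundary matrix $A$ is the $n\times n$ $\mathbb Z_2$-matrix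 with $A[i,j]=1$ iff $\sigma_i$ is a codimension-one face of $\sigma_j$; row/column $i$ represents $\sigma_i$. For a nonzero column $j$ of a matrix $B$, $\mathrm{low}_B(j)$ is the largest $i$ with $B[i,j]=1$; column $j$ is homogeneous if nonzero and $\sigma_j$, $\sigma_{\mathrm{low}_B(j)}$ are in the same Morse set. ConMat reduction phase on $A$ (in place): for $j=1,\dots,n$: for $i=\mathrm{low}_A(j)$ down to $1$: if $A[i,j]=1$ and some column $s<j$ of the current matrix is homogeneous with $\mathrm{low}_A(s)=i$, add column $s$ to column $j$ (mod 2). *)

From HB Require Import structures.
From mathcomp Require Import all_boot all_order all_algebra.
Set Implicit Arguments. Unset Strict Implicit. Unset Printing Implicit Defensive.
Import GRing.Theory.
Local Open Scope ring_scope.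

Definition simplicial_complex (V : finType) (K : {set {set V}}) : Prop :=
  set0 \notin K /\
  forall s t : {set V}, s \in K -> t \subset s -> t != set0 -> t \in K.

Definition cl (V : finType) (K : {set {set V}}) (s : {set V}) : {set {set V}} :=
  [set t in K | t \subset s].

Definition convex (V : finType) (W : {set {set V}}) : Prop :=
  forall s t m : {set V}, s \in W -> t \in W -> s \subset m -> m \subset t -> m \in W.

Definition multivector_field (V : finType) (K : {set {set V}})
    (mvf : {set {set {set V}}}) : Prop :=
  partition mvf K /\ forall W, W \in mvf -> convex W.

Definition Fmv (V : finType) (K : {set {set V}}) (mvf : {set {set {set V}}})
    (s : {set V}) : {set {set V}} :=
  pblock mvf s :|: cl K s.

Definition mv_path (V : finType) (K : {set {set V}}) (mvf : {set {set {set V}}})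
    (x : {set V}) (s : seq {set V}) : bool :=
  path (fun a b => b \in Fmv K mvf a) x s.

(* Indexed family M : P -> sets of simplices, a partition of K (some M_p may be
   empty), such that every path from M_p to M_q has q <= p. *)
Definition morse_decomposition (V : finType) (K : {set {set V}})
    (mvf : {set {set {set V}}}) (d : Order.disp_t) (P : finPOrderType d)
    (M : P -> {set {set V}}) : Prop :=
  (forall p q : P, p != q -> [disjoint M p & M q]) /\
  (\bigcup_(p : P) M p = K) /\
  (forall (p q : P) (x : {set V}) (s : seq {set V}),
      x \in M p -> mv_path K mvf x s ->
      last x s \in M q -> (q <= p)%O).

Definition linear_extension (d : Order.disp_t) (P : finPOrderType d) (lin : rel P) : Prop :=
  reflexive lin /\ transitive lin /\ antisymmetric lin /\ total lin /\
  (forall p q : P, (p <= q)%O -> lin p q).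

Definition admissible_enumeration (V : finType) (K : {set {set V}})
    (d : Order.disp_t) (P : finPOrderType d) (M : P -> {set {set V}})
    (n : nat) (sig : 'I_n -> {set V}) : Prop :=
  injective sig /\ (forall i, sig i \in K) /\ (forall s, s \in K -> exists i, sig i = s) /\
  (exists lin : rel P, linear_extension lin /\
     forall (i j : 'I_n) (p q : P), (i <= j)%N -> sig i \in M p -> sig j \in M q -> lin p q) /\
  (forall i j : 'I_n, sig i \proper sig j -> (i < j)%N).

Definition codim1 (V : finType) (t s : {set V}) : bool :=
  (t \subset s) && (#|s| == #|t|.+1)%N.

Definition boundary_matrix (V : finType) (n : nat) (sig : 'I_n -> {set V})
  : 'M['F_2]_n :=
  \matrix_(i, j) (codim1 (sig i) (sig j))%:R.

Section ConMat.
Variables (V : finType) (d : Order.disp_t) (P : finPOrderType d)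
  (M : P -> {set {set V}}) (n : nat) (sig : 'I_n -> {set V}).

Definition is_low (B : 'M['F_2]_n) (j i : 'I_n) : bool :=
  (B i j != 0) && [forall i' : 'I_n, (B i' j != 0) ==> (i' <= i)%N].

Definition same_morse_set (s t : {set V}) : bool :=
  [exists p : P, (s \in M p) && (t \in M p)].

Definition homogeneous (B : 'M['F_2]_n) (s : 'I_n) : bool :=
  [exists l : 'I_n, is_low B s l && same_morse_set (sig s) (sig l)].

Definition addcol (B : 'M['F_2]_n) (s j : 'I_n) : 'M['F_2]_n :=
  \matrix_(r, c) (B r c + (if c == j then B r s else 0)).

(* Configurations of the algorithm:
   - Col j B   : about to start column j (0-based), current matrix B;
                 Col n B is the final state;
   - Row j m B : processing column j, rows m-1, m-2, ..., 0 remain to be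
                 examined (in this order), current matrix B. *)
Inductive cfg : Type :=
| Col of nat & 'M['F_2]_n
| Row of 'I_n & nat & 'M['F_2]_n.

Definition cfg_mat (c : cfg) : 'M['F_2]_n :=
  match c with Col _ B => B | Row _ _ B => B end.

(* One step of the algorithm; the label is Some (s, j) iff column s is added
   to column j in this step.  If several columns s qualify, any may be chosen. *)
Inductive conmat_step : cfg -> option ('I_n * 'I_n) -> cfg -> Prop :=
| st_start (j : 'I_n) (B : 'M['F_2]_n) (i : 'I_n) :
    is_low B j i -> conmat_step (Col j B) None (Row j i.+1 B)
| st_zero_col (j : 'I_n) (B : 'M['F_2]_n) :
    (forall i, ~~ is_low B j i) -> conmat_step (Col j B) None (Col j.+1 B)
| st_end_col (j : 'I_n) (B : 'M['F_2]_n) :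
    conmat_step (Row j 0 B) None (Col j.+1 B)
| st_add (j : 'I_n) (i : 'I_n) (B : 'M['F_2]_n) (s : 'I_n) :
    B i j != 0 -> (s < j)%N -> homogeneous B s -> is_low B s i ->
    conmat_step (Row j i.+1 B) (Some (s, j)) (Row j i (addcol B s j))
| st_skip (j : 'I_n) (i : 'I_n) (B : 'M['F_2]_n) :
    ~~ ((B i j != 0) &&
        [exists s : 'I_n, [&& (s < j)%N, homogeneous B s & is_low B s i]]) ->
    conmat_step (Row j i.+1 B) None (Row j i B).

Inductive reachable (A : 'M['F_2]_n) : cfg -> Prop :=
| reach_init : reachable A (Col 0 A)
| reach_step c o c' : reachable A c -> conmat_step c o c' -> reachable A c'.

End ConMat.

(* Call a matrix Morse-triangular if every nonzero entry B[l,j] has the Morse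
   set of sigma_l below that of sigma_j.  The boundary matrix is
   Morse-triangular, since a face sigma_l of sigma_j is reached from sigma_j
   by a path of length one.  ConMat adds a homogeneous column s to column j
   only at the row i = low(s), where B[i,j] = 1; sigma_s and sigma_i then share
   a Morse set, which lies below that of sigma_j.  So every nonzero entry of
   column s already satisfies the order condition for column j, which keeps the
   matrix Morse-triangular and also gives the claim about added columns. *)
From HB Require Import structures.
From mathcomp Require Import all_boot all_order all_algebra.
Set Implicit Arguments. Unset Strict Implicit. Unset Printing Implicit Defensive.
Import Order.POrderTheory GRing.Theory.

Section MorseTriangular.
Variables (V : finType) (d : Order.disp_t) (P : finPOrderType d)
  (M : P -> {set {set V}}) (n : nat) (sig : 'I_n -> {set V}).

Definition morse_triangular (B : 'M['F_2]_n) : Prop :=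
  forall (l j : 'I_n) (p q : P), B l j != 0%R ->
    sig l \in M p -> sig j \in M q -> (p <= q)%O.

Lemma is_low_inj (B : 'M['F_2]_n) (s a b : 'I_n) :
  is_low B s a -> is_low B s b -> a = b.
Proof.
move=> /andP[Ba /forallP lea] /andP[Bb /forallP leb].
by apply/val_inj/eqP; rewrite eqn_leq (implyP (leb a) Ba) (implyP (lea b) Bb).
Qed.

Lemma homogeneous_low_same_set (B : 'M['F_2]_n) (s i : 'I_n) :
  homogeneous M sig B s -> is_low B s i ->
  exists2 r : P, sig s \in M r & sig i \in M r.
Proof.
case/existsP=> l /andP[low_l /existsP[r /andP[Ms Ml]]] low_i.
by rewrite -(is_low_inj low_l low_i); exists r.
Qed.

Lemma homogeneous_added_col_le (B : 'M['F_2]_n) (i j s : 'I_n) (q : P) :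
  morse_triangular B -> B i j != 0%R ->
  homogeneous M sig B s -> is_low B s i -> sig j \in M q ->
  exists2 r : P, sig s \in M r & (r <= q)%O.
Proof.
move=> triB Bij hom_s low_i Mj.
have [r Ms Mi] := homogeneous_low_same_set hom_s low_i.
by exists r => //; apply: triB Bij Mi Mj.
Qed.

Lemma morse_triangular_addcol (B : 'M['F_2]_n) (i j s : 'I_n) :
  morse_triangular B -> B i j != 0%R ->
  homogeneous M sig B s -> is_low B s i ->
  morse_triangular (addcol B s j).
Proof.
move=> triB Bij hom_s low_i l c p q; rewrite mxE.
have [-> {c}|_] := eqVneq c j; last by rewrite addr0; apply: triB.
have [Blj0|Blj] := eqVneq (B l j) 0%R; last by move=> _; apply: triB.
rewrite Blj0 add0r => Bls Ml Mj.
have [r Ms le_rq] := homogeneous_added_col_le triB Bij hom_s low_i Mj.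
exact: le_trans (triB _ _ _ _ Bls Ml Ms) le_rq.
Qed.

Lemma conmat_step_morse_triangular (c c' : cfg n) o :
  conmat_step M sig c o c' ->
  morse_triangular (cfg_mat c) -> morse_triangular (cfg_mat c').
Proof.
case=> //= j i B s Bij _ hom_s low_i triB.
exact: morse_triangular_addcol triB Bij hom_s low_i.
Qed.

Lemma conmat_step_addP (c c' : cfg n) (k j : 'I_n) :
  conmat_step M sig c (Some (k, j)) c' ->
  exists2 i : 'I_n, cfg_mat c i j != 0%R &
    homogeneous M sig (cfg_mat c) k /\ is_low (cfg_mat c) k i.
Proof. by move=> step; inversion step; exists i. Qed.

Lemma reachable_morse_triangular (A : 'M['F_2]_n) (c : cfg n) :
  morse_triangular A -> reachable M sig A c -> morse_triangular (cfg_mat c).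
Proof.
move=> triA; elim=> // c0 o c' _ tri0 step.
exact: conmat_step_morse_triangular step tri0.
Qed.

End MorseTriangular.

Lemma mem_morse_set_uniq (V : finType) (d : Order.disp_t) (P : finPOrderType d)
    (M : P -> {set {set V}}) (s : {set V}) (p r : P) :
  (forall p q : P, p != q -> [disjoint M p & M q]) ->
  s \in M p -> s \in M r -> p = r.
Proof.
move=> disjM Mp Mr; apply/eqP; apply: contraT => neq_pr.
by move: (disjointFr (disjM _ _ neq_pr) Mp); rewrite Mr.
Qed.

Lemma boundary_matrix_morse_triangular (V : finType) (K : {set {set V}})
    (mvf : {set {set {set V}}}) (d : Order.disp_t) (P : finPOrderType d)
    (M : P -> {set {set V}}) (n : nat) (sig : 'I_n -> {set V}) :
  morse_decomposition K mvf M -> (forall i, sig i \in K) ->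
  morse_triangular M sig (boundary_matrix sig).
Proof.
move=> [_ [_ path_down]] sigK l j p q; rewrite mxE.
case/boolP: (codim1 (sig l) (sig j)) => [/andP[face _] _ Ml Mj|]; last by rewrite eqxx.
apply: (path_down q p (sig j) [:: sig l]) => //=.
by rewrite andbT /Fmv inE /cl inE sigK face orbT.
Qed.

Theorem proposition5 (V : finType) (K : {set {set V}}) (mvf : {set {set {set V}}})
    (d : Order.disp_t) (P : finPOrderType d) (M : P -> {set {set V}})
    (n : nat) (sig : 'I_n -> {set V}) :
  simplicial_complex K ->
  multivector_field K mvf ->
  morse_decomposition K mvf M ->
  admissible_enumeration K M sig ->
  let A := boundary_matrix sig in
  (forall c, reachable M sig A c ->
     forall (l j : 'I_n) (p q : P), cfg_mat c l j != 0%R ->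
       sig l \in M p -> sig j \in M q -> (p <= q)%O) /\
  (forall c c' (k j : 'I_n), reachable M sig A c ->
     conmat_step M sig c (Some (k, j)) c' ->
     forall p q : P, sig k \in M p -> sig j \in M q -> (p <= q)%O).
Proof.
move=> _ _ morseM [_ [sigK _]] A.
have triA : morse_triangular M sig A := boundary_matrix_morse_triangular morseM sigK.
have tri_reach c := @reachable_morse_triangular _ _ _ M _ sig A c triA.
split=> // c c' k j reach_c step p q Mk Mj.
have [i Bij [hom_k low_i]] := conmat_step_addP step.
have [r Mk' le_rq] := homogeneous_added_col_le (tri_reach _ reach_c) Bij hom_k low_i Mj.
by rewrite (mem_morse_set_uniq morseM.1 Mk Mk').
Qed.
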